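(* Let $(N,J,h)$ be a 2-dimensional almost Norden manifold of constant sectional curvature $k'$ and let $(\mathcal{C}(N),\varphi,\xi,\eta,g)$ be the cone over it (constructed as in the context). Then for $(\mathcal{C}(N),\varphi,\xi,\eta,g)$: (1) the sectional curvatures of all non-degenerate $\xi$-sections vanish; (2) $\tau^*=0$; (3) $\tau^{**}=\tau$.
   Context: An almost Norden manifold $(N,J,h)$ is a manifold $N$ with an almost complex structure $J$ and a pseudo-Riemannian metric $h$ satisfying $h(Jx,Jy)=-h(x,y)$; constant sectional curvature $k'$ means its curvature tensor is $R'(x,y,z,w)=k'\{h(y,z)h(x,w)-h(x,z)h(y,w)\}$. The cone is $\mathcal{C}(N)=\mathbb{R}^+\times N$, $t$ the coordinate on $\mathbb{R}^+=(0,\infty)$, with metric $g=t^2h+\mathrm{d}t^2$ and structure $\xi=\tfrac{\mathrm{d}}{\mathrm{d}t}$, $\eta=\mathrm{d}t$, $\varphi=J$ on vectors tangent to $N$, $\varphi\xi=0$. Let $\nabla$ be the Levi-Civita connection of $g$, $R(x,y)=\nabla_x\nabla_y-\nabla_y\nabla_x-\nabla_{[x,y]}$, $R(x,y,z,w)=g(R(x,y)z,w)$. For a basis $\{e_i\}$ with $(g^{ij})$ the inverse of $(g(e_i,e_j))$ (summation convention): $\rho(y,z)=g^{ij}R(e_i,y,z,e_j)$, $\rho^*(y,z)=g^{ij}R(e_i,y,z,\varphi e_j)$, $\tau=g^{ij}\rho(e_i,e_j)$, $\tau^*=g^{ij}\rho^*(e_i,e_j)$, $\tau^{**}=g^{ij}\rho^*(e_i,\varphi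 e_j)$. The sectional curvature of a non-degenerate 2-plane $\alpha$ with orthogonal basis $\{x,y\}$ is $k(\alpha)=R(x,y,y,x)/(g(x,x)g(y,y))$; $\alpha$ is a $\xi$-section if $\xi\in\alpha$. *)

From HB Require Import structures.
From mathcomp Require Import all_boot all_order all_algebra.
From mathcomp Require Import all_classical all_reals all_analysis.
Set Implicit Arguments. Unset Strict Implicit. Unset Printing Implicit Defensive.
Import Order.TTheory GRing.Theory Num.Theory.
Import numFieldNormedType.Exports.
Local Open Scope ring_scope.

Definition ev {R : realType} {n : nat} (i : 'I_n) : 'rV[R]_n := delta_mx 0 i.

Definition pd {R : realType} {n : nat} (i : 'I_n) (f : 'rV[R]_n -> R)
  (x : 'rV[R]_n) : R := derive f x (ev i).

Fixpoint Ck {R : realType} {n : nat} (k : nat) (f : 'rV[R]_n -> R) : Prop :=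
  continuous f /\
  match k with
  | 0 => True
  | k'.+1 => forall i : 'I_n, (forall x, derivable f x (ev i)) /\ Ck k' (pd i f)
  end.
Definition smooth {R : realType} {n : nat} (f : 'rV[R]_n -> R) : Prop :=
  forall k, Ck k f.

Definition metric {R : realType} {n : nat} (G : 'rV[R]_n -> 'M[R]_n)
  (x u v : 'rV[R]_n) : R :=
  \sum_(i < n) \sum_(j < n) u 0 i * G x i j * v 0 j.

Definition christ {R : realType} {n : nat} (G : 'rV[R]_n -> 'M[R]_n)
  (m j k : 'I_n) (x : 'rV[R]_n) : R :=
  2^-1 * \sum_(l < n) (invmx (G x)) m l *
    (pd j (fun y => G y l k) x + pd k (fun y => G y l j) x
     - pd l (fun y => G y j k) x).

(* R(d_i,d_j)d_k = Rup^m_{ijk} d_m, with R(X,Y) = nabla_X nabla_Y - nabla_Y nabla_X - nabla_[X,Y] *)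
Definition Rup {R : realType} {n : nat} (G : 'rV[R]_n -> 'M[R]_n)
  (m i j k : 'I_n) (x : 'rV[R]_n) : R :=
  pd i (christ G m j k) x - pd j (christ G m i k) x
  + \sum_(l < n) (christ G l j k x * christ G m i l x
                  - christ G l i k x * christ G m j l x).

Definition Rlow {R : realType} {n : nat} (G : 'rV[R]_n -> 'M[R]_n)
  (i j k w : 'I_n) (x : 'rV[R]_n) : R :=
  \sum_(m < n) G x m w * Rup G m i j k x.

Definition curv {R : realType} {n : nat} (G : 'rV[R]_n -> 'M[R]_n)
  (x X Y Z W : 'rV[R]_n) : R :=
  \sum_(i < n) \sum_(j < n) \sum_(k < n) \sum_(l < n)
    X 0 i * Y 0 j * Z 0 k * W 0 l * Rlow G i j k l x.

Definition phiv {R : realType} {n : nat} (P : 'M[R]_n) (v : 'rV[R]_n) : 'rV[R]_n :=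
  \row_(i < n) \sum_(j < n) P i j * v 0 j.

Definition ricci {R : realType} {n : nat} (G : 'rV[R]_n -> 'M[R]_n)
  (x y z : 'rV[R]_n) : R :=
  \sum_(i < n) \sum_(j < n) (invmx (G x)) i j * curv G x (ev i) y z (ev j).

Definition ricci_star {R : realType} {n : nat} (G Phi : 'rV[R]_n -> 'M[R]_n)
  (x y z : 'rV[R]_n) : R :=
  \sum_(i < n) \sum_(j < n)
    (invmx (G x)) i j * curv G x (ev i) y z (phiv (Phi x) (ev j)).

Definition scal_tau {R : realType} {n : nat} (G : 'rV[R]_n -> 'M[R]_n)
  (x : 'rV[R]_n) : R :=
  \sum_(i < n) \sum_(j < n) (invmx (G x)) i j * ricci G x (ev i) (ev j).

Definition tau_star {R : realType} {n : nat} (G Phi : 'rV[R]_n -> 'M[R]_n)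
  (x : 'rV[R]_n) : R :=
  \sum_(i < n) \sum_(j < n) (invmx (G x)) i j * ricci_star G Phi x (ev i) (ev j).

Definition tau_star2 {R : realType} {n : nat} (G Phi : 'rV[R]_n -> 'M[R]_n)
  (x : 'rV[R]_n) : R :=
  \sum_(i < n) \sum_(j < n)
    (invmx (G x)) i j * ricci_star G Phi x (ev i) (phiv (Phi x) (ev j)).

(* sectional curvature of the plane spanned by an orthogonal basis {u, v} *)
Definition sectional {R : realType} {n : nat} (G : 'rV[R]_n -> 'M[R]_n)
  (x u v : 'rV[R]_n) : R :=
  curv G x u v v u / (metric G x u u * metric G x v v).

(* almost Norden structure (J, h) on a coordinate chart R^2 of N *)
Definition almost_norden {R : realType} (J h : 'rV[R]_2 -> 'M[R]_2) : Prop :=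
  (forall i j, smooth (fun x => J x i j)) /\
  (forall i j, smooth (fun x => h x i j)) /\
  (forall x, J x *m J x = - 1%:M) /\
  (forall x, (h x)^T = h x) /\
  (forall x, h x \in unitmx) /\
  (forall x u v, metric h x (phiv (J x) u) (phiv (J x) v) = - metric h x u v).

Definition constant_sectional_curvature {R : realType}
  (h : 'rV[R]_2 -> 'M[R]_2) (k' : R) : Prop :=
  forall x X Y Z W, curv h x X Y Z W =
    k' * (metric h x Y Z * metric h x X W - metric h x X Z * metric h x Y W).

(* The cone C(N) = R^+ x N in coordinates (t, p): coordinate 0 is t. *)
Definition cone_t {R : realType} (X : 'rV[R]_(1 + 2)) : R := X 0 (lshift 2 ord0).
Definition cone_metric {R : realType} (h : 'rV[R]_2 -> 'M[R]_2)
  (X : 'rV[R]_(1 + 2)) : 'M[R]_(1 + 2) :=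
  block_mx 1%:M 0 0 ((cone_t X ^+ 2) *: h (rsubmx X)).
Definition cone_phi {R : realType} (J : 'rV[R]_2 -> 'M[R]_2)
  (X : 'rV[R]_(1 + 2)) : 'M[R]_(1 + 2) :=
  block_mx 0 0 0 (J (rsubmx X)).
Definition cone_xi {R : realType} : 'rV[R]_(1 + 2) := row_mx (const_mx 1) 0.

From HB Require Import structures.
From mathcomp Require Import all_boot all_order all_algebra.
From mathcomp Require Import all_classical all_reals all_analysis.
From mathcomp Require Import ring lra.
Import Order.TTheory GRing.Theory Num.Theory.
Import numFieldNormedType.Exports.
Set Implicit Arguments. Unset Strict Implicit. Unset Printing Implicit Defensive.
Local Open Scope ring_scope.

(* In the coordinates (t, p) of the cone the metric is dt^2 + t^2 h, so its
   Christoffel symbols are G^t_ab = - t h_ab, G^a_tb = G^a_bt = delta^a_b / t,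
   G^c_ab = G(h)^c_ab, and all others vanish.  Consequently every component of
   the curvature tensor with a radial index vanishes, while
   R_abcd = t^2 (R(h)_abcd - (h_bc h_ad - h_ac h_bd)), which for constant
   curvature k' is the space form tensor with constant (k' - 1) t^2.
   (1) R(u, v, v, u) then only sees the N-components of u and v and equals
   (k' - 1) t^2 det h (u ^ v)^2, where u ^ v = 0 as soon as xi is a combination
   of u and v.  (2), (3) The traces only involve the N-block t^-2 h^-1 of the
   inverse metric; writing R = c (g g - g g) there, tau* = c tr J and
   tau** = - c tr J^2 = 2 c = tau, and tr J = 0 because a real 2x2 matrix with
   J^2 = -1 has the form [[a, b], [-(1 + a^2)/b, -a]]. *)

Section Coordinates.
Variables (R : realType) (n : nat).
Implicit Types (G : 'rV[R]_n -> 'M[R]_n) (x : 'rV[R]_n) (F : 'I_n -> R).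

Lemma ev_entry (i j : 'I_n) : (ev i : 'rV[R]_n) 0 j = (i == j)%:R.
Proof. by rewrite /ev mxE eqxx andTb eq_sym. Qed.

Lemma sumr_single (i : 'I_n) F : (forall j, j != i -> F j = 0) -> \sum_j F j = F i.
Proof. by move=> F0; rewrite (bigD1 i) //= big1 ?addr0 // => j /F0. Qed.
Arguments sumr_single i [F].

Lemma sumr_deltal (i : 'I_n) F : \sum_j (i == j)%:R * F j = F i.
Proof.
rewrite (sumr_single i) ?eqxx ?mul1r // => j /negbTE ji.
by rewrite eq_sym ji mul0r.
Qed.

Lemma sumr_deltar (i : 'I_n) F : \sum_j F j * (i == j)%:R = F i.
Proof. by rewrite -[RHS](sumr_deltal i); apply: eq_bigr => j _; rewrite mulrC. Qed.

Lemma metric_ev G x (i j : 'I_n) : metric G x (ev i) (ev j) = G x i j.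
Proof.
rewrite /metric (sumr_single i) => [|a /negbTE ai]; last first.
  by apply: big1 => b _; rewrite ev_entry eq_sym ai !mul0r.
rewrite (sumr_single j) => [|b /negbTE bj]; last by rewrite (ev_entry j) eq_sym bj mulr0.
by rewrite !ev_entry !eqxx mul1r mulr1.
Qed.

Lemma curv_ev G x (i j k l : 'I_n) :
  curv G x (ev i) (ev j) (ev k) (ev l) = Rlow G i j k l x.
Proof.
have ev0 (a b : 'I_n) : a != b -> (ev b : 'rV[R]_n) 0 a = 0.
  by rewrite ev_entry eq_sym => /negbTE ->.
rewrite /curv (sumr_single i) => [|a /ev0 ai]; last first.
  by do 3![apply: big1 => ? _]; rewrite ai !mul0r.
rewrite (sumr_single j) => [|b /ev0 bj]; last first.
  by do 2![apply: big1 => ? _]; rewrite bj mulr0 !mul0r.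
rewrite (sumr_single k) => [|c /ev0 ck]; last by apply: big1 => ? _; rewrite ck mulr0 !mul0r.
rewrite (sumr_single l) => [|d /ev0 dl]; last by rewrite dl mulr0 mul0r.
by rewrite !ev_entry !eqxx !mul1r.
Qed.

Lemma phiv_ev (P : 'M[R]_n) (j m : 'I_n) : phiv P (ev j) 0 m = P m j.
Proof.
by rewrite /phiv mxE; under eq_bigr => a _ do rewrite ev_entry; rewrite sumr_deltar.
Qed.

Lemma pd_metric_sym G (l a b : 'I_n) x : (forall y, (G y)^T = G y) ->
  pd l (fun y => G y a b) x = pd l (fun y => G y b a) x.
Proof.
move=> Gsym; rewrite (_ : (fun y => G y a b) = fun y => G y b a) //.
by apply/funext => y; rewrite -[in LHS]Gsym mxE.
Qed.

Lemma christ_sym G (m j k : 'I_n) : (forall y, (G y)^T = G y) ->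
  christ G m j k = christ G m k j.
Proof.
move=> Gsym; apply/funext => x; rewrite /christ; congr (_ * _); apply: eq_bigr => l _.
by rewrite (pd_metric_sym l j k) // [pd j _ _ + _]addrC.
Qed.

Lemma christ_lower G (a b c : 'I_n) x : G x \in unitmx ->
  \sum_e G x a e * christ G e b c x =
  2^-1 * (pd b (fun y => G y a c) x + pd c (fun y => G y a b) x
          - pd a (fun y => G y b c) x).
Proof.
move=> Gu; rewrite /christ.
under eq_bigr => e _ do rewrite mulrCA mulr_sumr.
rewrite -mulr_sumr exchange_big /=; congr (_ * _).
under eq_bigr => l _ do under eq_bigr => e _ do rewrite mulrA.
under eq_bigr => l _ do rewrite -mulr_suml.
have GGinv l : \sum_e G x a e * invmx (G x) e l = (a == l)%:R.
  by have /matrixP/(_ a l) := mulmxV Gu; rewrite !mxE.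
by under eq_bigr => l _ do rewrite GGinv; rewrite sumr_deltal.
Qed.

Lemma Rup_skew G (m i j k : 'I_n) x : Rup G m i j k x = - Rup G m j i k x.
Proof. by rewrite /Rup !sumrB opprD !opprB. Qed.

Lemma Rup_diag G (m i k : 'I_n) x : Rup G m i i k x = 0.
Proof. by rewrite /Rup !sumrB !subrr addr0. Qed.

Lemma pdMl (i : 'I_n) (f : 'rV[R]_n -> R) (K : R) x :
  derivable f x (ev i) -> pd i (fun y => K * f y) x = K * pd i f x.
Proof. by move=> df; rewrite /pd -(deriveMl K df). Qed.

Lemma pd_cst (i : 'I_n) (K : R) x : pd i (fun _ => K) x = 0.
Proof. exact: derive_cst. Qed.

End Coordinates.
Arguments sumr_single [R n] i [F].

Lemma sum_ord2 (V : nmodType) (F : 'I_2 -> V) : \sum_(a < 2) F a = F 0 + F 1.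
Proof. by rewrite big_ord_recl big_ord1; congr (_ + F _); apply: val_inj. Qed.

Lemma ord2P (a : 'I_2) : a = 0 \/ a = 1.
Proof. by case: a => [[|[|//]] ?]; [left|right]; apply: val_inj. Qed.

Lemma eq_ord2E : (((0 : 'I_2) == 1) = false) * (((1 : 'I_2) == 0) = false).
Proof. by []. Qed.

Section Matrix2.
Variable F : fieldType.
Implicit Types M : 'M[F]_2.

Lemma mulVmx2 M : M \in unitmx ->
  let N := invmx M in
  [/\ N 0 0 * M 0 0 + N 0 1 * M 1 0 = 1, N 0 0 * M 0 1 + N 0 1 * M 1 1 = 0,
      N 1 0 * M 0 0 + N 1 1 * M 1 0 = 0 & N 1 0 * M 0 1 + N 1 1 * M 1 1 = 1].
Proof.
move=> Mu N; have /matrixP NM := mulVmx Mu.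
have := NM 0 0; have := NM 0 1; have := NM 1 0; have := NM 1 1.
by rewrite !mxE !sum_ord2 ?eqxx ?eq_ord2E /= => ? ? ? ?.
Qed.

Lemma det2_neq0 M : M \in unitmx -> M 0 0 * M 1 1 - M 0 1 * M 1 0 != 0.
Proof.
move=> /mulVmx2; set N := invmx M => -[e00 e01 e10 e11].
apply/eqP => d0; suff : (1 : F) = 0 by move/eqP; rewrite oner_eq0.
transitivity ((N 0 0 * M 0 0 + N 0 1 * M 1 0) * (N 1 0 * M 0 1 + N 1 1 * M 1 1)
              - (N 0 0 * M 0 1 + N 0 1 * M 1 1) * (N 1 0 * M 0 0 + N 1 1 * M 1 0)).
  by rewrite e00 e01 e10 e11; ring.
transitivity ((M 0 0 * M 1 1 - M 0 1 * M 1 0) * (N 0 0 * N 1 1 - N 0 1 * N 1 0)); first ring.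
by rewrite d0 mul0r.
Qed.

Lemma invmx2 M : M \in unitmx ->
  let d := M 0 0 * M 1 1 - M 0 1 * M 1 0 in
  [/\ invmx M 0 0 = M 1 1 / d, invmx M 0 1 = - M 0 1 / d,
      invmx M 1 0 = - M 1 0 / d & invmx M 1 1 = M 0 0 / d].
Proof.
move=> Mu d; have dn : d != 0 := det2_neq0 Mu.
have [e00 e01 e10 e11] := mulVmx2 Mu; set N := invmx M in e00 e01 e10 e11 *.
split; apply: (mulIf dn); rewrite mulfVK //.
- transitivity (M 1 1 * (N 0 0 * M 0 0 + N 0 1 * M 1 0)
                - M 1 0 * (N 0 0 * M 0 1 + N 0 1 * M 1 1)); first by rewrite /d; ring.
  by rewrite e00 e01; ring.
- transitivity (M 0 0 * (N 0 0 * M 0 1 + N 0 1 * M 1 1)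
                - M 0 1 * (N 0 0 * M 0 0 + N 0 1 * M 1 0)); first by rewrite /d; ring.
  by rewrite e00 e01; ring.
- transitivity (M 1 1 * (N 1 0 * M 0 0 + N 1 1 * M 1 0)
                - M 1 0 * (N 1 0 * M 0 1 + N 1 1 * M 1 1)); first by rewrite /d; ring.
  by rewrite e10 e11; ring.
- transitivity (M 0 0 * (N 1 0 * M 0 1 + N 1 1 * M 1 1)
                - M 0 1 * (N 1 0 * M 0 0 + N 1 1 * M 1 0)); first by rewrite /d; ring.
  by rewrite e10 e11; ring.
Qed.

End Matrix2.

Lemma sqr_mx2_eqN1 (R : realFieldType) (J : 'M[R]_2) : J *m J = - 1%:M ->
  [/\ J 1 1 = - J 0 0, J 0 1 != 0 & J 1 0 = (-1 - J 0 0 ^+ 2) / J 0 1].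
Proof.
move/matrixP => JJ; have := JJ 0 0; have := JJ 0 1.
rewrite !mxE !sum_ord2 ?eqxx ?eq_ord2E /= => e01 e00.
have J01 : J 0 1 != 0.
  apply/eqP => J01; move: e00; rewrite J01 mul0r addr0.
  by have := sqr_ge0 (J 0 0); rewrite expr2; lra.
split=> //; last by apply: (mulIf J01); rewrite mulfVK // [J 1 0 * _]mulrC expr2; lra.
have : J 0 1 * (J 0 0 + J 1 1) = 0 by rewrite -[RHS]oppr0 -e01; ring.
by move/eqP; rewrite mulf_eq0 (negbTE J01) /= => /eqP; lra.
Qed.

(* Cone coordinates: index [ti] is the radial coordinate t, [ni a] the a-th
   coordinate of N.  Lemma names ending in a string of t's and n's record the
   kinds of the indices, in order. *)
Local Notation ti := (lshift 2 (ord0 : 'I_1)).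
Local Notation ni := (rshift 1).

Section ConeCoordinates.
Variable R : realType.
Implicit Types (y : 'rV[R]_(1 + 2)) (s t K : R).

Lemma cone_indexP (i : 'I_(1 + 2)) : i = ti \/ exists a, i = ni a.
Proof.
case: (splitP i) => [j ij|a ij]; [left|right; exists a]; apply/val_inj => //=.
by rewrite ij; case: j ij => [[]].
Qed.

Lemma sum_cone_index (F : 'I_(1 + 2) -> R) :
  \sum_(l < 1 + 2) F l = F ti + \sum_(a < 2) F (ni a).
Proof. by rewrite big_split_ord big_ord1. Qed.

Lemma cone_xi_span_wedge u v : (exists a b : R, cone_xi = a *: u + b *: v) ->
  u 0 (ni 0) * v 0 (ni 1) - u 0 (ni 1) * v 0 (ni 0) = 0.
Proof.
case=> a [b] xi.
have xi_t : a * u 0 ti + b * v 0 ti = 1.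
  by have := congr1 (fun w : 'rV[R]_(1 + 2) => w 0 ti) xi; rewrite /cone_xi row_mxEl !mxE.
have xi_n c : a * u 0 (ni c) + b * v 0 (ni c) = 0.
  by have := congr1 (fun w : 'rV[R]_(1 + 2) => w 0 (ni c)) xi; rewrite /cone_xi row_mxEr !mxE.
rewrite -[LHS]mulr1 -xi_t.
transitivity (u 0 ti * (v 0 (ni 1) * (a * u 0 (ni 0) + b * v 0 (ni 0))
                        - v 0 (ni 0) * (a * u 0 (ni 1) + b * v 0 (ni 1)))
              + v 0 ti * (u 0 (ni 0) * (a * u 0 (ni 1) + b * v 0 (ni 1))
                          - u 0 (ni 1) * (a * u 0 (ni 0) + b * v 0 (ni 0)))); first ring.
by rewrite !xi_n; ring.
Qed.

Lemma pd_radial (F : R -> 'rV[R]_2 -> R) y :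
  pd ti (fun z => F (cone_t z) (rsubmx z)) y =
  derive (fun s => F s (rsubmx y)) (cone_t y) 1.
Proof.
have shift s : cone_t (s *: ev ti + y) = s + cone_t y /\ rsubmx (s *: ev ti + y) = rsubmx y.
  split; first by rewrite /cone_t !mxE eqxx mulr1.
  by apply/rowP => j; rewrite !mxE eqxx eq_rlshift mulr0 add0r.
rewrite /pd /derive; do 2 f_equal; apply/funext => s /=.
by have [-> ->] := shift s; rewrite /GRing.scale /= mulr1.
Qed.

Lemma pd_tangential (F : R -> 'rV[R]_2 -> R) a y :
  pd (ni a) (fun z => F (cone_t z) (rsubmx z)) y = pd a (F (cone_t y)) (rsubmx y).
Proof.
have shift s : cone_t (s *: ev (ni a) + y) = cone_t y /\
               rsubmx (s *: ev (ni a) + y) = s *: ev a + rsubmx y.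
  split; first by rewrite /cone_t !mxE eqxx eq_lrshift mulr0 add0r.
  by apply/rowP => j; rewrite !mxE eq_rshift.
rewrite /pd /derive; do 2 f_equal; apply/funext => s /=.
by have [-> ->] := shift s.
Qed.

Lemma cone_t_gt0_near y : 0 < cone_t y -> \forall z \near y, 0 < cone_t z.
Proof.
move=> ty; have t_cont := @coord_continuous R 1 (1 + 2) 0 ti y.
have t_nbhs : nbhs (cone_t y) (fun x : R => 0 < x).
  by apply: open_nbhs_nbhs; split => //; exact: open_gt.
exact: t_cont _ t_nbhs.
Qed.

Lemma derive_sqrMr K t : derive (fun s => s ^+ 2 * K) t 1 = 2 * t * K.
Proof.
have -> : (fun s => s ^+ 2 * K) = (@id R * @id R) * cst K.
  by apply/funext => s /=; rewrite expr2.
have di := @derivable_id R R t 1.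
rewrite (deriveM (derivableM di di) (derivable_cst K t 1)) (deriveM di di).
by rewrite derive_id derive_cst /= scaler0 add0r /GRing.scale /=; ring.
Qed.

Lemma derive_idMr K t : derive (fun s => s * K) t 1 = K.
Proof.
have di := @derivable_id R R t 1.
rewrite (_ : (fun s => s * K) = @id R * cst K) //.
rewrite (deriveM di (derivable_cst K t 1)) derive_id derive_cst /= scaler0 add0r.
by rewrite /GRing.scale /= mulr1.
Qed.

Lemma derive_invMr K t : t != 0 -> derive (fun s => s^-1 * K) t 1 = - t^-2 * K.
Proof.
move=> t0; have di := @derivable_id R R t 1.
rewrite (_ : (fun s => s^-1 * K) = (fun s => (id s)^-1) * cst K) //.
rewrite (deriveM (derivableV t0 di) (derivable_cst K t 1)) derive_cst scaler0 add0r.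
by rewrite (deriveV t0 di) derive_id /GRing.scale /=; ring.
Qed.

End ConeCoordinates.

Definition space_form (R : realType) (n : nat) (k : R) (H : 'M[R]_n) (a b c e : 'I_n) :=
  k * (H b c * H a e - H a c * H b e).

Lemma Rlow_space_form (R : realType) (h : 'rV[R]_2 -> 'M[R]_2) (k : R) x a b c e :
  constant_sectional_curvature h k -> Rlow h a b c e x = space_form k (h x) a b c e.
Proof. by move=> hk; rewrite -curv_ev hk !metric_ev. Qed.

Section ConeMetric.
Variables (R : realType) (h : 'rV[R]_2 -> 'M[R]_2).
Hypothesis hsym : forall p, (h p)^T = h p.
Hypothesis hunit : forall p, h p \in unitmx.
Hypothesis hder : forall (a b c : 'I_2) p, derivable (fun q => h q a b) p (ev c).
Local Notation G := (cone_metric h).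
Implicit Types (y z : 'rV[R]_(1 + 2)).

Lemma cone_metric_tt y : G y ti ti = 1.
Proof. by rewrite /cone_metric block_mxEul mxE. Qed.
Lemma cone_metric_tn y a : G y ti (ni a) = 0.
Proof. by rewrite /cone_metric block_mxEur mxE. Qed.
Lemma cone_metric_nt y a : G y (ni a) ti = 0.
Proof. by rewrite /cone_metric block_mxEdl mxE. Qed.
Lemma cone_metric_nn y a b : G y (ni a) (ni b) = cone_t y ^+ 2 * h (rsubmx y) a b.
Proof. by rewrite /cone_metric block_mxEdr mxE. Qed.

Lemma cone_metric_sym y : (G y)^T = G y.
Proof. by rewrite /cone_metric tr_block_mx !trmx0 tr_scalar_mx linearZ /= hsym. Qed.

Lemma pd_cone_metric_tl i j y : pd i (fun z => G z ti j) y = 0.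
Proof.
have [->|[a ->]] := cone_indexP j.
  rewrite (_ : (fun z => _) = fun _ => 1) ?pd_cst //.
  by apply/funext => z; rewrite cone_metric_tt.
rewrite (_ : (fun z => _) = fun _ => 0) ?pd_cst //.
by apply/funext => z; rewrite cone_metric_tn.
Qed.

Lemma pd_cone_metric_tr i j y : pd i (fun z => G z j ti) y = 0.
Proof. by rewrite pd_metric_sym ?pd_cone_metric_tl //; exact: cone_metric_sym. Qed.

Lemma pd_cone_metric_nn_t a b y :
  pd ti (fun z => G z (ni a) (ni b)) y = 2 * cone_t y * h (rsubmx y) a b.
Proof.
rewrite (_ : (fun z => _) = fun z => cone_t z ^+ 2 * h (rsubmx z) a b).
  by rewrite (pd_radial (fun s p => s ^+ 2 * h p a b)) derive_sqrMr.
by apply/funext => z; rewrite cone_metric_nn.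
Qed.

Lemma pd_cone_metric_nn_n c a b y :
  pd (ni c) (fun z => G z (ni a) (ni b)) y =
  cone_t y ^+ 2 * pd c (fun q => h q a b) (rsubmx y).
Proof.
rewrite (_ : (fun z => _) = fun z => cone_t z ^+ 2 * h (rsubmx z) a b).
  by rewrite (pd_tangential (fun s p => s ^+ 2 * h p a b)) pdMl.
by apply/funext => z; rewrite cone_metric_nn.
Qed.

Lemma cone_christ_sym m j k : christ G m j k = christ G m k j.
Proof. by apply: christ_sym; exact: cone_metric_sym. Qed.

Section InverseMetric.
Variables (y : 'rV[R]_(1 + 2)) (ty : cone_t y != 0).

Lemma invmx_cone_metric :
  invmx (G y) = block_mx 1 0 0 (cone_t y ^-2 *: invmx (h (rsubmx y))).
Proof.
have hyu : cone_t y ^+ 2 *: h (rsubmx y) \in unitmx.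
  by rewrite unitmxZ ?hunit // unitfE expf_neq0.
rewrite /cone_metric invmx_block_diag ?invmx1 ?invmxZ //.
by rewrite block_diag_mx_unit unitmx1 hyu.
Qed.

Lemma invmx_cone_metric_tt : invmx (G y) ti ti = 1.
Proof. by rewrite invmx_cone_metric block_mxEul mxE. Qed.
Lemma invmx_cone_metric_tn a : invmx (G y) ti (ni a) = 0.
Proof. by rewrite invmx_cone_metric block_mxEur mxE. Qed.
Lemma invmx_cone_metric_nt a : invmx (G y) (ni a) ti = 0.
Proof. by rewrite invmx_cone_metric block_mxEdl mxE. Qed.
Lemma invmx_cone_metric_nn a b :
  invmx (G y) (ni a) (ni b) = cone_t y ^-2 * invmx (h (rsubmx y)) a b.
Proof. by rewrite invmx_cone_metric block_mxEdr mxE. Qed.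

Lemma cone_christ_t j k : christ G ti j k y = - 2^-1 * pd ti (fun z => G z j k) y.
Proof.
rewrite /christ sum_cone_index invmx_cone_metric_tt big1 => [|d _]; last first.
  by rewrite invmx_cone_metric_tn mul0r.
by rewrite !pd_cone_metric_tl add0r sub0r mul1r addr0 mulrN mulNr.
Qed.

Lemma cone_christ_n c j k : christ G (ni c) j k y =
  2^-1 * cone_t y ^-2 * \sum_(d < 2) invmx (h (rsubmx y)) c d *
    (pd j (fun z => G z (ni d) k) y + pd k (fun z => G z (ni d) j) y
     - pd (ni d) (fun z => G z j k) y).
Proof.
rewrite /christ sum_cone_index invmx_cone_metric_nt mul0r add0r -mulrA [in RHS]mulr_sumr.
by congr (_ * _); apply: eq_bigr => d _; rewrite invmx_cone_metric_nn mulrA.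
Qed.

Lemma cone_christ_ttt : christ G ti ti ti y = 0.
Proof. by rewrite cone_christ_t pd_cone_metric_tl mulr0. Qed.
Lemma cone_christ_ttn b : christ G ti ti (ni b) y = 0.
Proof. by rewrite cone_christ_t pd_cone_metric_tl mulr0. Qed.
Lemma cone_christ_tnt a : christ G ti (ni a) ti y = 0.
Proof. by rewrite cone_christ_t pd_cone_metric_tr mulr0. Qed.
Lemma cone_christ_tnn a b : christ G ti (ni a) (ni b) y = - (cone_t y * h (rsubmx y) a b).
Proof. by rewrite cone_christ_t pd_cone_metric_nn_t; field. Qed.

Lemma cone_christ_ntt c : christ G (ni c) ti ti y = 0.
Proof.
rewrite cone_christ_n big1 ?mulr0 // => d _.
by rewrite pd_cone_metric_tr pd_cone_metric_tl addr0 subr0 mulr0.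
Qed.

Lemma cone_christ_ntn c b : christ G (ni c) ti (ni b) y = (cone_t y)^-1 * (c == b)%:R.
Proof.
have hinvh : \sum_(d < 2) invmx (h (rsubmx y)) c d * h (rsubmx y) d b = (c == b)%:R.
  by have /matrixP/(_ c b) := mulVmx (hunit (rsubmx y)); rewrite !mxE.
rewrite cone_christ_n -hinvh !mulr_sumr; apply: eq_bigr => d _.
rewrite pd_cone_metric_nn_t pd_cone_metric_tr pd_cone_metric_tl addr0 subr0.
by field.
Qed.

Lemma cone_christ_nnt c a : christ G (ni c) (ni a) ti y = (cone_t y)^-1 * (c == a)%:R.
Proof. by rewrite cone_christ_sym cone_christ_ntn. Qed.

Lemma cone_christ_nnn c a b :
  christ G (ni c) (ni a) (ni b) y = christ h c a b (rsubmx y).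
Proof.
rewrite cone_christ_n /christ -!mulrA; congr (_ * _); rewrite mulr_sumr.
by apply: eq_bigr => d _; rewrite !pd_cone_metric_nn_n; field.
Qed.

End InverseMetric.

Section AtPoint.
Variables (X : 'rV[R]_(1 + 2)) (tX : 0 < cone_t X).
Let tX0 : cone_t X != 0. Proof. by rewrite gt_eqF. Qed.
Local Notation t := (cone_t X).
Local Notation p := (rsubmx X).

Lemma pd_eq_near (f g : 'rV[R]_(1 + 2) -> R) i :
  (forall z, cone_t z != 0 -> f z = g z) -> pd i f X = pd i g X.
Proof.
move=> fg; apply: near_eq_derive; apply: filterS (cone_t_gt0_near tX) => z tz.
by apply: fg; rewrite gt_eqF.
Qed.

Lemma pd_near_radial f (F : R -> 'rV[R]_2 -> R) :
  (forall z, cone_t z != 0 -> f z = F (cone_t z) (rsubmx z)) ->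
  pd ti f X = derive (fun s => F s p) t 1.
Proof. by move=> /pd_eq_near ->; rewrite pd_radial. Qed.

Lemma pd_near_tangential f (F : R -> 'rV[R]_2 -> R) a :
  (forall z, cone_t z != 0 -> f z = F (cone_t z) (rsubmx z)) ->
  pd (ni a) f X = pd a (F t) p.
Proof. by move=> /pd_eq_near ->; rewrite pd_tangential. Qed.

Lemma pd_near_zero f i : (forall z, cone_t z != 0 -> f z = 0) -> pd i f X = 0.
Proof. by move=> /pd_eq_near ->; rewrite pd_cst. Qed.

Lemma pd_cone_christ_ttt i : pd i (christ G ti ti ti) X = 0.
Proof. by apply: pd_near_zero => z tz; rewrite cone_christ_ttt. Qed.
Lemma pd_cone_christ_ttn i b : pd i (christ G ti ti (ni b)) X = 0.
Proof. by apply: pd_near_zero => z tz; rewrite cone_christ_ttn. Qed.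
Lemma pd_cone_christ_tnt i a : pd i (christ G ti (ni a) ti) X = 0.
Proof. by apply: pd_near_zero => z tz; rewrite cone_christ_tnt. Qed.
Lemma pd_cone_christ_ntt i c : pd i (christ G (ni c) ti ti) X = 0.
Proof. by apply: pd_near_zero => z tz; rewrite cone_christ_ntt. Qed.

Lemma pd_cone_christ_tnn_t a b : pd ti (christ G ti (ni a) (ni b)) X = - h p a b.
Proof.
rewrite (pd_near_radial (F := fun s q => s * - h q a b)) ?derive_idMr // => z tz.
by rewrite cone_christ_tnn // mulrN.
Qed.

Lemma pd_cone_christ_tnn_n c a b :
  pd (ni c) (christ G ti (ni a) (ni b)) X = - t * pd c (fun q => h q a b) p.
Proof.
rewrite (pd_near_tangential (F := fun s q => - s * h q a b)) ?pdMl // => z tz.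
by rewrite cone_christ_tnn // mulNr.
Qed.

Lemma pd_cone_christ_ntn_t c b :
  pd ti (christ G (ni c) ti (ni b)) X = - t^-2 * (c == b)%:R.
Proof.
rewrite (pd_near_radial (F := fun s (q : 'rV[R]_2) => s^-1 * (c == b)%:R)).
  exact: derive_invMr.
by move=> z tz; rewrite cone_christ_ntn.
Qed.

Lemma pd_cone_christ_ntn_n d c b : pd (ni d) (christ G (ni c) ti (ni b)) X = 0.
Proof.
rewrite (pd_near_tangential (F := fun s (q : 'rV[R]_2) => s^-1 * (c == b)%:R)).
  exact: pd_cst.
by move=> z tz; rewrite cone_christ_ntn.
Qed.

Lemma pd_cone_christ_nnt_t c a :
  pd ti (christ G (ni c) (ni a) ti) X = - t^-2 * (c == a)%:R.
Proof. by rewrite cone_christ_sym pd_cone_christ_ntn_t. Qed.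

Lemma pd_cone_christ_nnt_n d c a : pd (ni d) (christ G (ni c) (ni a) ti) X = 0.
Proof. by rewrite cone_christ_sym pd_cone_christ_ntn_n. Qed.

Lemma pd_cone_christ_nnn_t c a b : pd ti (christ G (ni c) (ni a) (ni b)) X = 0.
Proof.
rewrite (pd_near_radial (F := fun _ q => christ h c a b q)) ?derive_cst //.
by move=> z tz; rewrite cone_christ_nnn.
Qed.

Lemma pd_cone_christ_nnn_n d c a b :
  pd (ni d) (christ G (ni c) (ni a) (ni b)) X = pd d (christ h c a b) p.
Proof.
rewrite (pd_near_tangential (F := fun _ q => christ h c a b q)) // => z tz.
by rewrite cone_christ_nnn.
Qed.

Let h_sym a b : h p a b = h p b a.
Proof. by rewrite -[in LHS]hsym mxE. Qed.

Let christ_h_sym c a b : christ h c a b p = christ h c b a p.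
Proof. by rewrite (christ_sym c a b hsym). Qed.

Local Ltac christ_rw := rewrite ?(cone_christ_ttt tX0) ?(cone_christ_ttn tX0)
  ?(cone_christ_tnt tX0) ?(cone_christ_tnn tX0) ?(cone_christ_ntt tX0)
  ?(cone_christ_ntn tX0) ?(cone_christ_nnt tX0) ?(cone_christ_nnn tX0).

(* A plain [rewrite ?pd_cone_christ_ttn] would try to unify [pd _ (christ G ..)]
   with the other derivatives of Christoffel symbols, unfolding [pd] and [christ]
   in the process, which is prohibitively slow; matching syntactically first
   only ever rewrites with fully instantiated lemmas. *)
Local Ltac pd_christ_rw := repeat match goal with
  | |- context [pd ?i (christ G ti ti ti) X] => rewrite (pd_cone_christ_ttt i)
  | |- context [pd ?i (christ G ti ti (ni ?b)) X] => rewrite (pd_cone_christ_ttn i b)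
  | |- context [pd ?i (christ G ti (ni ?a) ti) X] => rewrite (pd_cone_christ_tnt i a)
  | |- context [pd ?i (christ G (ni ?c) ti ti) X] => rewrite (pd_cone_christ_ntt i c)
  | |- context [pd ti (christ G ti (ni ?a) (ni ?b)) X] => rewrite (pd_cone_christ_tnn_t a b)
  | |- context [pd (ni ?c) (christ G ti (ni ?a) (ni ?b)) X] =>
      rewrite (pd_cone_christ_tnn_n c a b)
  | |- context [pd ti (christ G (ni ?c) ti (ni ?b)) X] => rewrite (pd_cone_christ_ntn_t c b)
  | |- context [pd (ni ?d) (christ G (ni ?c) ti (ni ?b)) X] =>
      rewrite (pd_cone_christ_ntn_n d c b)
  | |- context [pd ti (christ G (ni ?c) (ni ?a) ti) X] => rewrite (pd_cone_christ_nnt_t c a)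
  | |- context [pd (ni ?d) (christ G (ni ?c) (ni ?a) ti) X] =>
      rewrite (pd_cone_christ_nnt_n d c a)
  | |- context [pd ti (christ G (ni ?c) (ni ?a) (ni ?b)) X] =>
      rewrite (pd_cone_christ_nnn_t c a b)
  | |- context [pd (ni ?d) (christ G (ni ?c) (ni ?a) (ni ?b)) X] =>
      rewrite (pd_cone_christ_nnn_n d c a b)
  end.

Local Ltac cone_Rup := rewrite /Rup sum_cone_index; pd_christ_rw;
  christ_rw; under eq_bigr => e _ do christ_rw.

Lemma Rup_cone_ttnt a : Rup G ti ti (ni a) ti X = 0.
Proof. by cone_Rup; rewrite !sum_ord2; ring. Qed.

Lemma Rup_cone_ttnn a b : Rup G ti ti (ni a) (ni b) X = 0.
Proof.
cone_Rup; rewrite !sum_ord2; case: (ord2P b) => ->;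
  by rewrite ?eqxx ?eq_ord2E /=; field.
Qed.

Lemma Rup_cone_tnnt a b : Rup G ti (ni a) (ni b) ti X = 0.
Proof.
cone_Rup; rewrite !sum_ord2; case: (ord2P a) => ->; case: (ord2P b) => ->;
  by rewrite ?eqxx ?eq_ord2E /= ?(h_sym 1 0); field.
Qed.

Lemma Rup_cone_tnnn a b c : Rup G ti (ni a) (ni b) (ni c) X = 0.
Proof.
cone_Rup.
have -> : \sum_(e < 2) (christ h e b c p * - (t * h p a e) - christ h e a c p * - (t * h p b e))
  = - t * \sum_(e < 2) h p a e * christ h e b c p + t * \sum_(e < 2) h p b e * christ h e a c p.
  by rewrite !sum_ord2; ring.
by rewrite !christ_lower // (pd_metric_sym c b a p hsym); field.
Qed.

Lemma Rup_cone_ntnt d a : Rup G (ni d) ti (ni a) ti X = 0.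
Proof.
cone_Rup; rewrite !sum_ord2; case: (ord2P a) => ->; case: (ord2P d) => ->;
  by rewrite ?eqxx ?eq_ord2E /=; field.
Qed.

Lemma Rup_cone_ntnn d a b : Rup G (ni d) ti (ni a) (ni b) X = 0.
Proof.
cone_Rup; rewrite !sum_ord2; case: (ord2P b) => ->; case: (ord2P d) => ->;
  by rewrite ?eqxx ?eq_ord2E /=; field.
Qed.

Lemma Rup_cone_nnnt d a b : Rup G (ni d) (ni a) (ni b) ti X = 0.
Proof.
cone_Rup; rewrite !sum_ord2; case: (ord2P a) => ->; case: (ord2P b) => ->;
  by rewrite ?eqxx ?eq_ord2E /= ?(christ_h_sym _ 1 0); field.
Qed.

Lemma Rup_cone_nnnn d a b c : Rup G (ni d) (ni a) (ni b) (ni c) X =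
  Rup h d a b c p + (h p a c * (d == b)%:R - h p b c * (d == a)%:R).
Proof. by cone_Rup; rewrite [LHS]addrA addrAC; congr (_ + _); field. Qed.

Lemma Rup_cone_t i j k : Rup G ti i j k X = 0.
Proof.
have [->|[a ->]] := cone_indexP i; have [->|[b ->]] := cone_indexP j.
- exact: Rup_diag.
- by have [->|[c ->]] := cone_indexP k; [exact: Rup_cone_ttnt | exact: Rup_cone_ttnn].
- rewrite Rup_skew; have [->|[c ->]] := cone_indexP k.
    by rewrite Rup_cone_ttnt oppr0.
  by rewrite Rup_cone_ttnn oppr0.
- by have [->|[c ->]] := cone_indexP k; [exact: Rup_cone_tnnt | exact: Rup_cone_tnnn].
Qed.

Lemma Rup_cone_n_radial d i j k : [|| i == ti, j == ti | k == ti] ->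
  Rup G (ni d) i j k X = 0.
Proof.
have [->|[a ->]] := cone_indexP i; have [->|[b ->]] := cone_indexP j => radial.
- exact: Rup_diag.
- by have [->|[c ->]] := cone_indexP k; [exact: Rup_cone_ntnt | exact: Rup_cone_ntnn].
- rewrite Rup_skew; have [->|[c ->]] := cone_indexP k.
    by rewrite Rup_cone_ntnt oppr0.
  by rewrite Rup_cone_ntnn oppr0.
- move: radial; have [->|[c ->]] := cone_indexP k; last by rewrite !eq_rlshift.
  by move=> _; exact: Rup_cone_nnnt.
Qed.

Lemma Rlow_cone_radial i j k l : [|| i == ti, j == ti, k == ti | l == ti] ->
  Rlow G i j k l X = 0.
Proof.
have [-> | [e ->]] := cone_indexP l => radial; rewrite /Rlow sum_cone_index.
  rewrite cone_metric_tt mul1r Rup_cone_t add0r big1 // => d _.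
  by rewrite cone_metric_nt mul0r.
rewrite cone_metric_tn mul0r add0r big1 // => d _.
by rewrite Rup_cone_n_radial ?mulr0 //; move: radial; rewrite eq_rlshift orbF.
Qed.

Lemma Rlow_cone_nnnn a b c e : Rlow G (ni a) (ni b) (ni c) (ni e) X =
  t ^+ 2 * (Rlow h a b c e p - (h p b c * h p a e - h p a c * h p b e)).
Proof.
rewrite /Rlow sum_cone_index cone_metric_tn mul0r add0r.
under eq_bigr => d _ do rewrite cone_metric_nn Rup_cone_nnnn.
rewrite !sum_ord2; move: (Rup h) => Rh.
by case: (ord2P a) => ->; case: (ord2P b) => ->; rewrite ?eqxx ?eq_ord2E /=; ring.
Qed.

Variable k' : R.
Hypothesis hcurv : constant_sectional_curvature h k'.
Local Notation K := (t ^+ 2 * (k' - 1)).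

Lemma Rlow_cone_space_form a b c e :
  Rlow G (ni a) (ni b) (ni c) (ni e) X = space_form K (h p) a b c e.
Proof. by rewrite Rlow_cone_nnnn (Rlow_space_form _ _ _ _ _ hcurv) /space_form; ring. Qed.

Lemma cone_curv U V W Z : curv G X U V W Z =
  \sum_(a < 2) \sum_(b < 2) \sum_(c < 2) \sum_(e < 2)
    U 0 (ni a) * V 0 (ni b) * W 0 (ni c) * Z 0 (ni e) * space_form K (h p) a b c e.
Proof.
rewrite /curv sum_cone_index big1 ?add0r => [|j _]; last first.
  by do 2![apply: big1 => ? _]; rewrite Rlow_cone_radial ?eqxx // mulr0.
apply: eq_bigr => a _; rewrite sum_cone_index big1 ?add0r => [|k _]; last first.
  by apply: big1 => ? _; rewrite Rlow_cone_radial ?eqxx ?orbT // mulr0.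
apply: eq_bigr => b _; rewrite sum_cone_index big1 ?add0r => [|l _]; last first.
  by rewrite Rlow_cone_radial ?eqxx ?orbT // mulr0.
apply: eq_bigr => c _; rewrite sum_cone_index Rlow_cone_radial ?eqxx ?orbT // mulr0 add0r.
by apply: eq_bigr => e _; rewrite Rlow_cone_space_form.
Qed.

Lemma cone_curv_t V W Z : curv G X (ev ti) V W Z = 0.
Proof. by rewrite cone_curv; do 4![apply: big1 => ? _]; rewrite ev_entry eq_lrshift !mul0r. Qed.

Lemma cone_curv_nt c W Z : curv G X (ev (ni c)) (ev ti) W Z = 0.
Proof.
rewrite cone_curv; do 4![apply: big1 => ? _].
by rewrite [ev ti 0 _]ev_entry eq_lrshift mulr0 !mul0r.
Qed.

Lemma cone_curv_nn c a W Z : curv G X (ev (ni c)) (ev (ni a)) W Z =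
  \sum_(c' < 2) \sum_(e < 2) W 0 (ni c') * Z 0 (ni e) * space_form K (h p) c a c' e.
Proof.
have evn (i j : 'I_2) : ev (ni i) 0 (ni j) = (j == i)%:R :> R.
  by rewrite ev_entry eq_rshift eq_sym.
rewrite cone_curv (sumr_single c) => [|c1 /negbTE cc1]; last first.
  by do 3![apply: big1 => ? _]; rewrite evn cc1 !mul0r.
rewrite (sumr_single a) => [|a1 /negbTE aa1]; last first.
  by do 2![apply: big1 => ? _]; rewrite [ev (ni a) 0 _]evn aa1 mulr0 !mul0r.
by apply: eq_bigr => c' _; apply: eq_bigr => e _; rewrite !evn !eqxx !mul1r.
Qed.

Lemma cone_curv_sectional u v : curv G X u v v u =
  K * (h p 0 0 * h p 1 1 - h p 0 1 ^+ 2) *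
  (u 0 (ni 0) * v 0 (ni 1) - u 0 (ni 1) * v 0 (ni 0)) ^+ 2.
Proof. by rewrite cone_curv !sum_ord2 /space_form !(h_sym 1 0); ring. Qed.

Lemma cone_contract (T : 'I_(1 + 2) -> 'I_(1 + 2) -> R) : (forall j, T ti j = 0) ->
  \sum_i \sum_j invmx (G X) i j * T i j =
  t^-2 * \sum_(a < 2) \sum_(b < 2) invmx (h p) a b * T (ni a) (ni b).
Proof.
move=> T0; rewrite sum_cone_index big1 ?add0r => [|j _]; last by rewrite T0 mulr0.
rewrite mulr_sumr; apply: eq_bigr => a _.
rewrite sum_cone_index invmx_cone_metric_nt // mul0r add0r mulr_sumr.
by apply: eq_bigr => b _; rewrite invmx_cone_metric_nn // mulrA.
Qed.

Lemma cone_ricci y z : ricci G X y z =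
  t^-2 * \sum_(a < 2) \sum_(b < 2) invmx (h p) a b * curv G X (ev (ni a)) y z (ev (ni b)).
Proof. by rewrite /ricci cone_contract // => j; rewrite cone_curv_t. Qed.

Lemma cone_scal_tau : scal_tau G X =
  t^-2 * \sum_(a < 2) \sum_(b < 2) invmx (h p) a b * ricci G X (ev (ni a)) (ev (ni b)).
Proof.
rewrite /scal_tau cone_contract // => j; rewrite cone_ricci big1 ?mulr0 // => a _.
by apply: big1 => b _; rewrite cone_curv_nt mulr0.
Qed.

Variable J : 'rV[R]_2 -> 'M[R]_2.
Local Notation Phi := (cone_phi J).

Lemma cone_phi_nn a b : Phi X (ni a) (ni b) = J p a b.
Proof. by rewrite /cone_phi block_mxEdr. Qed.

Lemma cone_ricci_star y z : ricci_star G Phi X y z =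
  t^-2 * \sum_(a < 2) \sum_(b < 2)
    invmx (h p) a b * curv G X (ev (ni a)) y z (phiv (Phi X) (ev (ni b))).
Proof. by rewrite /ricci_star cone_contract // => j; rewrite cone_curv_t. Qed.

Lemma cone_ricci_star_t z : ricci_star G Phi X (ev ti) z = 0.
Proof.
rewrite cone_ricci_star big1 ?mulr0 // => a _.
by apply: big1 => b _; rewrite cone_curv_nt mulr0.
Qed.

Lemma cone_tau_star : tau_star G Phi X =
  t^-2 * \sum_(a < 2) \sum_(b < 2) invmx (h p) a b * ricci_star G Phi X (ev (ni a)) (ev (ni b)).
Proof. by rewrite /tau_star cone_contract // => j; rewrite cone_ricci_star_t. Qed.

Lemma cone_tau_star2 : tau_star2 G Phi X =
  t^-2 * \sum_(a < 2) \sum_(b < 2)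
    invmx (h p) a b * ricci_star G Phi X (ev (ni a)) (phiv (Phi X) (ev (ni b))).
Proof. by rewrite /tau_star2 cone_contract // => j; rewrite cone_ricci_star_t. Qed.

Hypothesis Jsq : forall q, J q *m J q = - 1%:M.

Let det_h_neq0 : h p 0 0 * h p 1 1 - h p 0 1 * h p 0 1 != 0.
Proof. by rewrite -[X in _ - _ * X]h_sym det2_neq0. Qed.

Let J01_neq0 : J p 0 1 != 0.
Proof. by case: (sqr_mx2_eqN1 (Jsq p)). Qed.

Local Ltac cone_trace_field :=
  rewrite ?ev_entry ?eq_rshift ?phiv_ev ?cone_phi_nn /space_form ?eqxx ?eq_ord2E /=;
  case: (invmx2 (hunit p)) => -> -> -> ->; case: (sqr_mx2_eqN1 (Jsq p)) => -> _ ->;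
  rewrite !(h_sym 1 0); field; rewrite ?det_h_neq0 ?tX0 ?J01_neq0.

Lemma cone_tau_star_eq0 : tau_star G Phi X = 0.
Proof.
rewrite cone_tau_star !sum_ord2 !cone_ricci_star !sum_ord2 !cone_curv_nn !sum_ord2.
by cone_trace_field.
Qed.

Lemma cone_tau_star2_eq_scal_tau : tau_star2 G Phi X = scal_tau G X.
Proof.
rewrite cone_tau_star2 cone_scal_tau !sum_ord2 !cone_ricci_star !cone_ricci !sum_ord2.
by rewrite !cone_curv_nn !sum_ord2; cone_trace_field.
Qed.

End AtPoint.

End ConeMetric.

Unset Implicit Arguments.
Set Strict Implicit.
Theorem proposition3p5 (R : realType) (J h : 'rV[R]_2 -> 'M[R]_2) (k' : R) :
  almost_norden J h ->
  constant_sectional_curvature h k' ->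
  [/\ (forall (X : 'rV[R]_(1 + 2)) (u v : 'rV[R]_(1 + 2)),
         0 < cone_t X ->
         (exists a b : R, cone_xi = a *: u + b *: v) ->
         metric (cone_metric h) X u v = 0 ->
         metric (cone_metric h) X u u * metric (cone_metric h) X v v != 0 ->
         sectional (cone_metric h) X u v = 0),
      (forall X : 'rV[R]_(1 + 2), 0 < cone_t X ->
         tau_star (cone_metric h) (cone_phi J) X = 0) &
      (forall X : 'rV[R]_(1 + 2), 0 < cone_t X ->
         tau_star2 (cone_metric h) (cone_phi J) X = scal_tau (cone_metric h) X)].
Proof.
move=> [_ [h_smooth [Jsq [hsym [hunit _]]]]] hcurv.
have hder a b c x : derivable (fun q => h q a b) x (ev c).
  by have [_ /(_ c) []] := h_smooth a b 1%N.
(* The curvature numerator vanishes for every pair spanning xi. *)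
split=> [X u v tX xi _ _ | X tX | X tX].
- rewrite /sectional (cone_curv_sectional hsym hunit hder tX hcurv).
  by rewrite (cone_xi_span_wedge xi) expr0n mulr0 mul0r.
- exact: (cone_tau_star_eq0 hsym hunit hder tX hcurv Jsq).
- exact: (cone_tau_star2_eq_scal_tau hsym hunit hder tX hcurv Jsq).
Qed.
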